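(* Let $D\ge 2$ be an integer and $n\ge 1$. Let $\mathcal{C}\subseteq(\mathbb{C}^D)^{\otimes n}$ be an $n$-qudit stabilizer code of dimension $K\ge 1$, with stabilizer $\mathcal{S}\subseteq\mathcal{P}_n$. Then $$K\cdot|\mathcal{S}| = D^n,$$ where $|\mathcal{S}|$ is the order of the group $\mathcal{S}$. In particular, $K$ is a divisor of $D^n$ (not necessarily a power of $D$ when $D$ is composite).
   Context: Fix an integer $D\ge2$, let $\omega=e^{2\pi i/D}$, and let all integer arithmetic be modulo $D$. On $\mathbb{C}^D$ with basis $\{|j\rangle\}_{j=0}^{D-1}$ define $Z=\sum_{j}\omega^j|j\rangle\langle j|$ and $X=\sum_j |j\rangle\langle j+1|$ (indices mod $D$), so $X^D=Z^D=I$ and $XZ=\omega ZX$. For $n$ qudits, a Pauli product is an operator $\omega^{\lambda}X_1^{x_1}Z_1^{z_1}\otimes\cdots\otimes X_n^{x_n}Z_n^{z_n}$ with $\lambda\in\mathbb{Z}_D$ and $\mathbf{x},\mathbf{z}\in\mathbb{Z}_D^n$; these form a group $\mathcal{P}_n$ (the generalized Pauli group) under multiplication. A stabilizer code is a subspace $\mathcal{C}$ of $(\mathbb{C}^D)^{\otimes n}$ of dimension $K\ge1$ such that: (C1) there is a subgroup $\mathcal{S}\le\mathcal{P}_n$ with $s|\psi\rangle=|\psi\rangle$ for all $s\in\mathcal{S}$ and all $|\psi\rangle\in\mathcal{C}$; (C2) $\mathcal{S}$ is maximal: every $s\in\mathcal{P}_n$ fixing every vector of $\mathcal{C}$ lies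 in $\mathcal{S}$; (C3) $\mathcal{C}$ is maximal: every vector fixed by all $s\in\mathcal{S}$ lies in $\mathcal{C}$. Then $\mathcal{S}$ is called the stabilizer of $\mathcal{C}$ (it is necessarily abelian). *)

From HB Require Import structures.
From mathcomp Require Import all_boot all_order all_algebra all_field.
Set Implicit Arguments. Unset Strict Implicit. Unset Printing Implicit Defensive.
Import Order.TTheory GRing.Theory Num.Theory.
Local Open Scope ring_scope.

(* omega = e^{2 pi i / D}: D.-root (-1) is the D-th root of -1 with minimal
   nonnegative argument, i.e. e^{i pi / D}; its square is e^{2 pi i / D}. *)
Definition omega (D : nat) : algC := (D.-root (-1)) ^+ 2.

(* computational basis labels |j_1 ... j_n>, j_i in Z_D (D >= 2 assumed) *)
Definition qbasis (D n : nat) := {ffun 'I_n -> 'Z_D}.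

(* states in (C^D)^{tensor n}: coefficient functions on the basis *)
Definition qstate (D n : nat) := {ffun qbasis D n -> algC^o}.

(* a Pauli product omega^lambda X^{x_1} Z^{z_1} (x) ... (x) X^{x_n} Z^{z_n},
   encoded by (lambda, (x, z)) *)
Definition pauli (D n : nat) :=
  ('Z_D * ({ffun 'I_n -> 'Z_D} * {ffun 'I_n -> 'Z_D}))%type.

(* Action: X|j> = |j-1>, Z|j> = omega^j |j>, so
   X^x Z^z |j> = omega^{z j} |j - x>, and the coefficient of |k> in
   (omega^lambda X^x Z^z) psi is omega^lambda * prod_i omega^{z_i (k_i + x_i)} * psi(k + x). *)
Definition pauli_op (D n : nat) (s : pauli D n) (v : qstate D n) : qstate D n :=
  [ffun k : qbasis D n =>
     omega D ^+ (val s.1)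
     * (\prod_(i < n) omega D ^+ (val (s.2.2 i * (k i + s.2.1 i))))
     * v [ffun i => k i + s.2.1 i]].

Definition pauli_id (D n : nat) : pauli D n := (0, ([ffun => 0], [ffun => 0])).

Definition is_stabilizer_code (D n : nat) (C : {vspace qstate D n})
    (S : {set pauli D n}) : Prop :=
  pauli_id D n \in S /\
      (forall s t, s \in S -> t \in S ->
         exists2 u, u \in S & forall v, pauli_op u v = pauli_op s (pauli_op t v)) /\
      (forall s, s \in S ->
         exists2 u, u \in S & forall v, pauli_op u (pauli_op s v) = v) /\
      (forall s v, s \in S -> v \in C -> pauli_op s v = v) /\
      (forall s, (forall v, v \in C -> pauli_op s v = v) -> s \in S) /\
      (forall v, (forall s, s \in S -> pauli_op s v = v) -> v \in C).

(* Let P = \sum_(s in S) s.  Since S is a group, P maps every vector into the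
   code, and P acts on the code as multiplication by |S|, so tr P = |S| K.
   Every Pauli product other than a multiple of the identity has zero trace
   (it either moves every basis vector or has phases summing to 0), and the
   only multiple of the identity in S is the identity itself, as S fixes a
   nonzero vector; hence tr P = D^n.  This needs omega to be a primitive D-th
   root of unity, which follows from the characterisation of D.-root (-1) as
   the D-th root of -1 of largest real part. *)

From HB Require Import structures.
From mathcomp Require Import all_boot all_order all_algebra all_field ring.
Set Implicit Arguments. Unset Strict Implicit. Unset Printing Implicit Defensive.
Import Order.TTheory GRing.Theory Num.Theory.
Local Open Scope ring_scope.

Lemma sum_expr_eq0 (R : idomainType) (x : R) g :
  x ^+ g = 1 -> x != 1 -> \sum_(k < g) x ^+ k = 0.
Proof.
move=> xg1 x_neq1; apply/eqP; move/eqP: (subrX1 x g).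
by rewrite xg1 subrr eq_sym mulf_eq0 subr_eq0 (negbTE x_neq1).
Qed.

Lemma sum_prim_root_exprM (R : idomainType) (z : R) g j :
  g.-primitive_root z -> (0 < j < g)%N -> \sum_(k < g) z ^+ (j * k) = 0.
Proof.
move=> prim_z /andP[j_gt0 j_lt_g]; under eq_bigr do rewrite exprM.
apply: sum_expr_eq0; first by rewrite exprAC (prim_expr_order prim_z) expr1n.
by rewrite -(prim_order_dvd prim_z) gtnNdvd.
Qed.

Lemma normC_sub1_sqr (u : algC) : `|u| = 1 -> `|u - 1| ^+ 2 = 2 - 2 * 'Re u.
Proof.
move=> u1; rewrite normCK rmorphB rmorph1 ReE mulrBl !mulrBr.
have -> : u * u^* = 1 by rewrite -normCK u1 expr1n.
rewrite mulrCA divff ?pnatr_eq0 // mulr1 !mul1r mulr1; ring.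
Qed.

Lemma norm_eq1_of_expr (u : algC) n : (0 < n)%N -> `|u ^+ n| = 1 -> `|u| = 1.
Proof. by move=> n_gt0 un1; apply/eqP; rewrite -(pexpr_eq1 n_gt0) // -normrX un1. Qed.

(* The sums [q y = 1 + y + ... + y ^+ g.-1] over the [g]-th roots [y] of [w]
   add up to [g] and are not all 1, so one of them has norm [> 1]; then
   [w - 1 = (y - 1) * q y] gives [|y - 1| < |w - 1|], i.e. ['Re w < 'Re y]. *)
Lemma root_with_larger_Re (w : algC) g :
  (1 < g)%N -> `|w| = 1 -> w != 1 -> exists2 y, y ^+ g = w & 'Re w < 'Re y.
Proof.
move=> g_gt1 w1 w_neq1; have g_gt0 := ltnW g_gt1.
have [zeta prim_zeta] := C_prim_root_exists g_gt0.
pose y (k : 'I_g) := g.-root w * zeta ^+ k.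
have yg k : y k ^+ g = w.
  by rewrite exprMn rootCK // exprAC (prim_expr_order prim_zeta) expr1n mulr1.
pose q (x : algC) := \sum_(j < g) x ^+ j.
have sum_q : \sum_k q (y k) = \sum_(k < g) 1.
  rewrite exchange_big (bigD1 (Ordinal g_gt0)) //= [X in _ + X]big1 => [|j j_neq0].
    by rewrite addr0; apply: eq_bigr => k _; rewrite expr0.
  under eq_bigr do rewrite exprMn -exprM mulnC.
  by rewrite -mulr_sumr sum_prim_root_exprM ?mulr0 ?ltn_ord ?andbT ?lt0n.
have [k q_gt1] : exists k, 1 < `|q (y k)|.
  apply/existsP; apply: contraT => /existsPn q_le1.
  have norm_q_le1 k : `|q (y k)| <= 1.
    by rewrite real_leNgt ?real1 ?normr_real ?q_le1.
  have q_eq1 := normC_sum_upper (fun k _ => norm_q_le1 k) sum_q.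
  have y_eq_w k : y k = w.
    by have := subrX1 (y k) g; rewrite yg -/(q _) q_eq1 // mulr1 => /addIr.
  have root_neq0 : g.-root w != 0.
    by rewrite rootC_eq0 // -normr_eq0 w1 oner_neq0.
  have : zeta ^+ 1 == 1.
    apply/eqP/(mulfI root_neq0); rewrite -(expr0 zeta).
    exact: etrans (y_eq_w (Ordinal g_gt1)) (esym (y_eq_w (Ordinal g_gt0))).
  by rewrite -(prim_order_dvd prim_zeta) dvdn1 gtn_eqF.
have y1 : `|y k| = 1 by apply: (norm_eq1_of_expr g_gt0); rewrite yg.
have y_neq1 : y k != 1 by apply: contraNneq w_neq1 => yk1; rewrite -(yg k) yk1 expr1n.
exists (y k) => //.
have : `|y k - 1| ^+ 2 < `|w - 1| ^+ 2.
  rewrite -(yg k) subrX1 -/(q _) normrM exprMn ltr_pMr ?exprn_egt1 //.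
  by rewrite exprn_gt0 // normr_gt0 subr_eq0.
by rewrite normC_sub1_sqr // normC_sub1_sqr // ltrD2l ltrN2 ltr_pM2l.
Qed.

Lemma Re_le_rootC n (x u : algC) :
  (0 < n)%N -> x \is Num.real -> u ^+ n = x -> 'Re u <= 'Re (n.-root x).
Proof.
move=> n_gt0 x_real un_x; have [Im_ge0 | Im_lt0] := boolP (0 <= 'Im u).
  exact: rootC_Re_max.
rewrite -Re_conj; apply: rootC_Re_max => //.
  by rewrite -rmorphXn un_x; apply/eqP; rewrite -CrealE.
by rewrite Im_conj oppr_ge0 ltW // real_ltNge ?Creal_Im.
Qed.

(* [D.-root (-1)] has the largest real part among the [D]-th roots of [-1].
   If its square had order [m < D], then [z ^+ m = -1], and a [D %/ m]-th
   root of [z] with larger real part would be another [D]-th root of [-1]. *)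
Lemma omega_prim_root D : (1 < D)%N -> D.-primitive_root (omega D).
Proof.
move=> D_gt1; have D_gt0 := ltnW D_gt1; rewrite /omega.
set z := D.-root (-1); have zD : z ^+ D = -1 by apply: rootCK.
have N1_neq1 : (-1 : algC) != 1 by rewrite lt_eqF // (lt_trans (ltrN10 _) ltr01).
have z2D : (z ^+ 2) ^+ D = 1 by rewrite exprAC zD sqrrN expr1n.
have [m prim_z2 m_dvd_D] := prim_order_exists D_gt0 z2D.
have [<- // | m_neq_D] := eqVneq m D; exfalso.
have zm : z ^+ m = -1.
  have /eqP := prim_expr_order prim_z2; rewrite -exprM mulnC exprM sqrf_eq1.
  case/orP => /eqP // zm1; move: N1_neq1.
  by rewrite -zD -(divnK m_dvd_D) mulnC exprM zm1 expr1n eqxx.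
have q_gt1 : (1 < D %/ m)%N.
  by rewrite ltn_divRL // mul1n ltn_neqAle m_neq_D dvdn_leq.
have z1 : `|z| = 1 by apply: (norm_eq1_of_expr D_gt0); rewrite zD normrN1.
have z_neq1 : z != 1 by apply: contraNneq N1_neq1 => z_eq1; rewrite -zD z_eq1 expr1n.
have [y yq Re_zy] := root_with_larger_Re q_gt1 z1 z_neq1.
have yD : y ^+ D = -1 by rewrite -(divnK m_dvd_D) exprM yq zm.
have := Re_le_rootC D_gt0 (rpredN1 _) yD.
by rewrite real_leNgt ?Creal_Re // Re_zy.
Qed.

Section PrimRootZp.
Variables (R : idomainType) (D : nat) (w : R).
Hypotheses (D_gt1 : (1 < D)%N) (prim_w : D.-primitive_root w).

Lemma prim_root_expZpD (x y : 'Z_D) : w ^+ val (x + y) = w ^+ val x * w ^+ val y.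
Proof.
rewrite -exprD; apply/eqP.
by rewrite (eq_prim_root_expr prim_w) /= modn_dvdm // Zp_cast.
Qed.

Lemma prim_root_expZp_inj : injective (fun x : 'Z_D => w ^+ val x).
Proof.
have lt_valD (x : 'Z_D) : (val x < D)%N by case: x => m /=; rewrite Zp_cast.
move=> x y /eqP; rewrite (eq_prim_root_expr prim_w) !modn_small ?lt_valD //.
by move/eqP/val_inj.
Qed.

Lemma prim_root_expZp_eq1 (x : 'Z_D) : (w ^+ val x == 1) = (x == 0).
Proof. by rewrite -(inj_eq prim_root_expZp_inj) expr0. Qed.

Lemma prim_root_expZp_neq0 (x : 'Z_D) : w ^+ val x != 0.
Proof. by rewrite expf_neq0 // (prim_root_eq0 prim_w) -lt0n ltnW. Qed.

End PrimRootZp.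

Section FunTrace.
Variables (F : fieldType) (I : finType).
Local Notation V := {ffun I -> F^o}.

Definition ffun_delta (i : I) : V := [ffun j => (j == i)%:R].

Definition ftrace (f : V -> V) : F := \sum_i f (ffun_delta i) i.

Lemma ffun_delta_sum (v : V) : v = \sum_i v i *: ffun_delta i.
Proof.
apply/ffunP => j; rewrite sum_ffunE (bigD1 j) //= big1 => [|i /negbTE ij].
  by rewrite !ffunE eqxx addr0; symmetry; apply: mulr1.
by rewrite !ffunE eq_sym ij; apply: mulr0.
Qed.

Lemma ftrace_sum (J : Type) (r : seq J) (P : pred J) (f : J -> V -> V) :
  ftrace (fun v => \sum_(j <- r | P j) f j v) = \sum_(j <- r | P j) ftrace (f j).
Proof. by rewrite /ftrace exchange_big; apply: eq_bigr => i _; rewrite sum_ffunE. Qed.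

Lemma ftrace_eigen_onto (C : {vspace V}) (f : {linear V -> V}) (c : F) :
  (forall v, f v \in C) -> {in C, forall v, f v = c *: v} ->
  ftrace f = c * (\dim C)%:R.
Proof.
move=> fC f_eigen; set X := vbasis C.
have freeX : free X := basis_free (vbasisP C).
pose a j k := coord X j (f (ffun_delta k)).
have f_delta k : f (ffun_delta k) = \sum_j a j k *: X`_j := coord_vbasis (fC _).
have diag j : \sum_k a j k * X`_j k = c.
  have XjC : X`_j \in C by apply/vbasis_mem/mem_nth; rewrite size_tuple.
  have := congr1 (coord X j) (f_eigen _ XjC).
  rewrite {1}(ffun_delta_sum X`_j) linearZ /= coord_free // eqxx mulr1 => <-.
  rewrite !linear_sum; apply: eq_bigr => k _.
  by rewrite !linearZ /= f_delta coord_sum_free // mulrC.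
rewrite /ftrace (eq_bigr (fun k => \sum_j a j k * X`_j k)) => [|k _].
  by rewrite exchange_big (eq_bigr (fun=> c)) // sumr_const card_ord mulr_natr.
by rewrite f_delta sum_ffunE; apply: eq_bigr => j _; rewrite ffunE.
Qed.

End FunTrace.

Arguments ffun_delta {F I} i.

Section PauliOperators.
Variables (D n : nat).

Definition pauli_phase (s : pauli D n) (k : qbasis D n) : algC :=
  omega D ^+ val s.1 * \prod_(i < n) omega D ^+ val (s.2.2 i * (k i + s.2.1 i)).

Lemma pauli_opE s v k : pauli_op s v k = pauli_phase s k * v (k + s.2.1).
Proof. by rewrite ffunE. Qed.

Lemma pauli_op_is_linear (s : pauli D n) : linear (pauli_op s).
Proof. by move=> a u v; apply/ffunP => k; rewrite !ffunE mulrDr mulrCA. Qed.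

HB.instance Definition _ (s : pauli D n) :=
  GRing.isLinear.Build algC (qstate D n) (qstate D n) _ (pauli_op s)
    (pauli_op_is_linear s).

Lemma pauli_op_delta s j k :
  pauli_op s (ffun_delta j) k = pauli_phase s k * (k + s.2.1 == j)%:R.
Proof. by rewrite pauli_opE ffunE. Qed.

Definition qbasis_unit (i0 : 'I_n) : qbasis D n := [ffun i => (i == i0)%:R].

Hypothesis D_gt1 : (1 < D)%N.
Let prim_omega := omega_prim_root D_gt1.

Lemma pauli_phaseD s k d :
  pauli_phase s (k + d) =
  pauli_phase s k * \prod_(i < n) omega D ^+ val (s.2.2 i * d i).
Proof.
rewrite /pauli_phase -mulrA -big_split; congr (_ * _); apply: eq_bigr => i _.
by rewrite !ffunE addrAC mulrDr (prim_root_expZpD D_gt1 prim_omega).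
Qed.

Lemma pauli_phaseNx s : pauli_phase s (- s.2.1) = omega D ^+ val s.1.
Proof. by rewrite /pauli_phase big1 ?mulr1 // => i _; rewrite !ffunE addNr mulr0. Qed.

Lemma prod_omega_unit (z : {ffun 'I_n -> 'Z_D}) i0 :
  \prod_(i < n) omega D ^+ val (z i * qbasis_unit i0 i) = omega D ^+ val (z i0).
Proof.
rewrite (bigD1 i0) // big1 => [|i /negbTE i_neq].
  by rewrite ffunE eqxx mulr1n mulr1 Monoid.mulm1.
by rewrite ffunE i_neq mulr0n mulr0.
Qed.

Lemma pauli_phase_neq0 s k : pauli_phase s k != 0.
Proof.
rewrite mulf_neq0 ?prodf_seq_neq0 ?(prim_root_expZp_neq0 D_gt1 prim_omega) //.
by apply/allP => i _; rewrite (prim_root_expZp_neq0 D_gt1 prim_omega).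
Qed.

Lemma pauli_op_inj (a b : pauli D n) :
  (forall v, pauli_op a v = pauli_op b v) -> a = b.
Proof.
move=> ab; have omega_inj := prim_root_expZp_inj D_gt1 prim_omega.
have delta_eq j k : pauli_phase a k * (k + a.2.1 == j)%:R =
                    pauli_phase b k * (k + b.2.1 == j)%:R.
  by rewrite -!pauli_op_delta ab.
have xab : a.2.1 = b.2.1.
  have := delta_eq a.2.1 0; rewrite !add0r eqxx mulr1.
  case: eqP => // _; rewrite mulr0 => /eqP.
  by rewrite (negbTE (pauli_phase_neq0 _ _)).
have phase_ab k : pauli_phase a k = pauli_phase b k.
  by have := delta_eq (k + a.2.1) k; rewrite xab eqxx !mulr1.
have lab : a.1 = b.1.
  by apply: omega_inj; rewrite /= -pauli_phaseNx -pauli_phaseNx xab phase_ab.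
have zab : a.2.2 = b.2.2.
  apply/ffunP => i0; have := phase_ab (- a.2.1 + qbasis_unit i0).
  rewrite {2}xab !pauli_phaseD !pauli_phaseNx !prod_omega_unit lab.
  by move/(mulfI (prim_root_expZp_neq0 D_gt1 prim_omega _))/omega_inj.
case: a b xab lab zab {ab delta_eq phase_ab} => [la [xa za]] [lb [xb zb]] /=.
by move=> -> -> ->.
Qed.

Lemma ftrace_pauli_op_eq0 (s : pauli D n) :
  (s.2.1 != 0) || (s.2.2 != 0) -> ftrace (pauli_op s) = 0.
Proof.
rewrite /ftrace; under eq_bigr do rewrite pauli_op_delta.
have [x_eq0 /= z_neq0 | x_neq0 _] := eqVneq s.2.1 0; last first.
  apply: big1 => k _.
  by rewrite -[k in _ == k]addr0 (inj_eq (addrI k)) (negbTE x_neq0) mulr0.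
under eq_bigr do rewrite x_eq0 addr0 eqxx mulr1.
have [i0 z_i0] : exists i0, s.2.2 i0 != 0.
  apply/existsP; apply: contraNT z_neq0 => /existsPn z0.
  by apply/eqP/ffunP => i; rewrite ffunE; apply/eqP/negPn/z0.
set T := \sum_k pauli_phase s k.
have T_rot : T = T * omega D ^+ val (s.2.2 i0).
  rewrite {1}/T (reindex_inj (addIr (qbasis_unit i0))) mulr_suml.
  by apply: eq_bigr => k _; rewrite pauli_phaseD prod_omega_unit.
move/eqP: T_rot; rewrite -subr_eq0 -{1}[T]mulr1 -mulrBr mulf_eq0 subr_eq0.
rewrite [1 == _]eq_sym (prim_root_expZp_eq1 D_gt1 prim_omega) (negbTE z_i0).
by rewrite orbF => /eqP.
Qed.

Lemma ftrace_pauli_op_id : ftrace (pauli_op (pauli_id D n)) = (D ^ n)%:R.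
Proof.
rewrite /ftrace (eq_bigr (fun=> 1)) => [|k _].
  by rewrite sumr_const card_ffun !card_ord Zp_cast.
rewrite pauli_op_delta /pauli_phase big1 => [|i _]; last by rewrite !ffunE mul0r.
by rewrite /= expr0 !mul1r addr0 eqxx.
Qed.

End PauliOperators.

Definition stab_sum D n (S : {set pauli D n}) (v : qstate D n) : qstate D n :=
  \sum_(s in S) pauli_op s v.

Lemma stab_sum_is_linear D n (S : {set pauli D n}) : linear (stab_sum S).
Proof.
move=> a u v; rewrite /stab_sum scaler_sumr -big_split.
by apply: eq_bigr => s _; rewrite linearP.
Qed.

HB.instance Definition _ D n (S : {set pauli D n}) :=
  GRing.isLinear.Build algC (qstate D n) (qstate D n) _ (stab_sum S)
    (stab_sum_is_linear S).

Section StabilizerCode.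
Variables (D n : nat) (C : {vspace qstate D n}) (S : {set pauli D n}).
Hypotheses (D_gt1 : (1 < D)%N) (C_neq0 : C != 0%VS).
Hypothesis S_id : pauli_id D n \in S.
Hypothesis S_mul : forall s t, s \in S -> t \in S ->
  exists2 u, u \in S & forall v, pauli_op u v = pauli_op s (pauli_op t v).
Hypothesis S_inv : forall s, s \in S ->
  exists2 u, u \in S & forall v, pauli_op u (pauli_op s v) = v.
Hypothesis S_fix : forall s v, s \in S -> v \in C -> pauli_op s v = v.
Hypothesis C_max : forall v, (forall s, s \in S -> pauli_op s v = v) -> v \in C.

Lemma pauli_op_stab_sum t v : t \in S -> pauli_op t (stab_sum S v) = stab_sum S v.
Proof.
move=> tS.
have tu_ex s : exists2 u, s \in S -> u \in S &
    s \in S -> forall v, pauli_op u v = pauli_op t (pauli_op s v).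
  have [sS | sS] := boolP (s \in S); last by exists s; rewrite // (negbTE sS).
  by have [u uS tsu] := S_mul tS sS; exists u.
have [u uS tu] := fin_all_exists2 tu_ex.
have [t' _ t't] := S_inv tS.
have u_inj : {in S &, injective u}.
  move=> s1 s2 s1S s2S u12; apply: (pauli_op_inj D_gt1) => w.
  by rewrite -(t't (pauli_op s1 w)) -tu // u12 tu // t't.
have uS_eq : u @: S = S.
  apply/eqP; rewrite eqEcard card_in_imset // leqnn andbT.
  by apply/subsetP => _ /imsetP[s sS ->]; apply: uS.
rewrite /stab_sum linear_sum -[in RHS]uS_eq big_imset //=.
by apply: eq_bigr => s sS; rewrite tu.
Qed.

Lemma stab_sum_in_code v : stab_sum S v \in C.
Proof. by apply: C_max => t tS; apply: pauli_op_stab_sum. Qed.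

Lemma stab_sum_code v : v \in C -> stab_sum S v = #|S|%:R *: v.
Proof.
move=> vC; rewrite /stab_sum (eq_bigr (fun=> v)) => [|s sS]; last exact: S_fix.
by rewrite sumr_const scaler_nat.
Qed.

Lemma stab_scalar_eq_id s : s \in S -> s.2.1 = 0 -> s.2.2 = 0 -> s = pauli_id D n.
Proof.
move=> sS x0 z0; set v := vpick C.
have [k vk_neq0] : exists k, v k != 0.
  apply/existsP; move: (C_neq0); rewrite -vpick0; apply: contraNT => /existsPn v0.
  by apply/eqP/ffunP => k; rewrite ffunE; apply/eqP/negPn/v0.
have := congr1 (fun w : qstate D n => w k) (S_fix sS (memv_pick C)).
rewrite /= pauli_opE x0 addr0 -{2}[v k]mul1r => /(mulIf vk_neq0).
rewrite /pauli_phase z0 big1 => [|i _]; last by rewrite ffunE mul0r.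
move/eqP; rewrite mulr1 (prim_root_expZp_eq1 D_gt1 (omega_prim_root D_gt1)).
move/eqP=> l0.
by case: s sS x0 z0 l0 => l [x z] /= _ -> -> ->.
Qed.

Lemma stab_code_dim : (\dim C * #|S|)%N = (D ^ n)%N.
Proof.
have tr_code : ftrace (stab_sum S) = #|S|%:R * (\dim C)%:R.
  by apply: ftrace_eigen_onto; [apply: stab_sum_in_code | apply: stab_sum_code].
have tr_basis : ftrace (stab_sum S) = (D ^ n)%:R.
  rewrite /stab_sum ftrace_sum (big_setD1 _ S_id) /= ftrace_pauli_op_id //.
  rewrite big1 ?addr0 //.
  move=> s /setD1P[s_neq_id sS]; apply: (ftrace_pauli_op_eq0 D_gt1).
  apply: contraNT s_neq_id => /norP[/negbNE/eqP x0 /negbNE/eqP z0].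
  by rewrite (stab_scalar_eq_id sS x0 z0).
by apply/eqP; rewrite -(eqr_nat algC) natrM mulrC -tr_code tr_basis.
Qed.

End StabilizerCode.

Theorem theorem1 (D n : nat) (hD : (1 < D)%N) (hn : (0 < n)%N)
    (C : {vspace qstate D n}) (S : {set pauli D n}) (K : nat)
    (hK : \dim C = K) (hK1 : (0 < K)%N)
    (hcode : is_stabilizer_code C S) :
  (K * #|S| = D ^ n)%N /\ (K %| D ^ n)%N.
Proof.
case: hcode => S_id [S_mul [S_inv [S_fix [_ C_max]]]].
have C_neq0 : C != 0%VS by rewrite -dimv_eq0 hK -lt0n.
have dim_code := stab_code_dim hD C_neq0 S_id S_mul S_inv S_fix C_max.
by rewrite -hK dim_code; split; rewrite // -dim_code dvdn_mulr.
Qed.
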